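(* Let $X$ be a path-connected space with base point $x_0$. Then $\mathbf{ltc}_n(X)=\mathbf{tc}_n(X)$ for every $n\ge1$, and $\mathbf{LTC}_n(X)=\mathbf{TC}_n(X)$ for every $n\ge 2$.
   Context: $I=[0,1]$. Path spaces with compact-open topology: $P_{x_0}X=\{f:I\to X\mid f(0)=x_0\}$, $\Omega_{x_0}X=\{f:I\to X\mid f(0)=f(1)=x_0\}$, $PX=\{f:I\to X\}$, $LX=\{f:I\to X\mid f(0)=f(1)\}$. Maps: $p_n:P_{x_0}X\to X^n$, $p_n(f)=(f(1/n),\dots,f((n-1)/n),f(1))$; $q_n:\Omega_{x_0}X\to X^n$, $q_n(f)=(f(1/(n+1)),\dots,f(n/(n+1)))$; $P_n:PX\to X^n$, $P_n(f)=(f(0),f(1/(n-1)),\dots,f((n-2)/(n-1)),f(1))$; $Q_n:LX\to X^n$, $Q_n(f)=(f(0),f(1/n),\dots,f((n-1)/n))$. For a map $p:E\to B$, the Schwarz genus $\mathbf{Sch}(p)$ is the least number $k$ of open sets $U_1,\dots,U_k$ covering $B$ such that over each $U_i$ there is a continuous map $s:U_i\to E$ with $p\circ s$ equal to the inclusion; $\mathbf{Sch}(p)=\infty$ if no such finite cover exists. Define $\mathbf{TC}_n(X)=\mathbf{Sch}(P_n)$ and $\mathbf{LTC}_n(X)=\mathbf{Sch}(Q_n)$ for $n\ge2$, and $\mathbf{tc}_n(X)=\mathbf{Sch}(p_n)$ and $\mathbf{ltc}_n(X)=\mathbf{Sch}(q_n)$ for $n\ge1$. *)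

From Stdlib Require Import Reals Lra ClassicalEpsilon.
Open Scope R_scope.

Set Implicit Arguments.

Definition is_topology {T : Type} (O : (T -> Prop) -> Prop) : Prop :=
  O (fun _ => True) /\
  (forall U V, O U -> O V -> O (fun x => U x /\ V x)) /\
  (forall F : (T -> Prop) -> Prop,
      (forall U, F U -> O U) -> O (fun x => exists U, F U /\ U x)).

Record Top := mkTop {
  carrier :> Type;
  topen : (carrier -> Prop) -> Prop;
  topen_is_topology : is_topology topen }.

Definition generated {T : Type} (S : (T -> Prop) -> Prop) (U : T -> Prop) : Prop :=
  forall O, is_topology O -> (forall V, S V -> O V) -> O U.

Lemma generated_is_topology {T : Type} (S : (T -> Prop) -> Prop) :
  is_topology (generated S).
Proof.
  split; [|split].
  - intros O [h1 _] _; exact h1.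
  - intros U V HU HV O HO HS. pose proof HO as [_ [h2 _]].
    apply h2; [apply HU | apply HV]; assumption.
  - intros F HF O HO HS. pose proof HO as [_ [_ h3]].
    apply h3. intros U FU. apply HF; auto.
Qed.

Definition genTop (T : Type) (S : (T -> Prop) -> Prop) : Top :=
  mkTop (generated_is_topology S).

Definition continuous {X Y : Top} (f : X -> Y) : Prop :=
  forall U, topen Y U -> topen X (fun x => U (f x)).

(** Subspace topology on {x | P x}: generated by preimages of opens under
    the inclusion (these already form a topology, so this is the usual one). *)
Definition subTop {X : Top} (P : X -> Prop) : Top :=
  genTop (fun V : {x : X | P x} -> Prop =>
            exists U, topen X U /\ V = (fun y => U (proj1_sig y))).

Definition compact_in {X : Top} (K : X -> Prop) : Prop :=
  forall F : (X -> Prop) -> Prop,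
    (forall U, F U -> topen X U) ->
    (forall x, K x -> exists U, F U /\ U x) ->
    exists l : list (X -> Prop),
      (forall U, List.In U l -> F U) /\
      (forall x, K x -> exists U, List.In U l /\ U x).

Definition R_open (U : R -> Prop) : Prop :=
  forall x, U x -> exists e, 0 < e /\ forall y, Rabs (y - x) < e -> U y.

Definition RTop : Top := genTop R_open.

Definition Itop : Top := @subTop RTop (fun t : R => 0 <= t <= 1).

Lemma clamp_in (r : R) : 0 <= Rmax 0 (Rmin 1 r) <= 1.
Proof.
  split.
  - apply Rmax_l.
  - apply Rmax_lub; [lra | apply Rmin_l].
Qed.

(** The point of I given by r, clamped to [0,1] (only used with r in [0,1]). *)
Definition pt (r : R) : Itop := exist _ (Rmax 0 (Rmin 1 r)) (clamp_in r).

Definition Paths (X : Top) : Type := {f : Itop -> X | continuous f}.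

Definition PX (X : Top) : Top :=
  genTop (fun W : Paths X -> Prop =>
    exists (K : Itop -> Prop) (U : X -> Prop),
      compact_in K /\ topen X U /\
      W = (fun f => forall t, K t -> U (proj1_sig f t))).

Definition ev {X : Top} (f : PX X) (r : R) : X := proj1_sig f (pt r).

Definition PbX (X : Top) (x0 : X) : Top := subTop (fun f : PX X => ev f 0 = x0).
Definition OmegaX (X : Top) (x0 : X) : Top :=
  subTop (fun f : PX X => ev f 0 = x0 /\ ev f 1 = x0).
Definition LX (X : Top) : Top := subTop (fun f : PX X => ev f 0 = ev f 1).

Definition idx (n : nat) : Type := {i : nat | (i < n)%nat}.

Definition prodTop (X : Top) (n : nat) : Top :=
  genTop (fun V : (idx n -> X) -> Prop =>
    exists (i : idx n) (U : X -> Prop), topen X U /\ V = (fun x => U (x i))).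

(* p_n(f) = (f(1/n), ..., f((n-1)/n), f(1)) : component i (0 <= i < n) is f((i+1)/n) *)
Definition p_map (X : Top) (x0 : X) (n : nat) (f : PbX X x0) : prodTop X n :=
  fun i => ev (proj1_sig f) (INR (S (proj1_sig i)) / INR n).

(* q_n(f) = (f(1/(n+1)), ..., f(n/(n+1))) : component i is f((i+1)/(n+1)) *)
Definition q_map (X : Top) (x0 : X) (n : nat) (f : OmegaX X x0) : prodTop X n :=
  fun i => ev (proj1_sig f) (INR (S (proj1_sig i)) / INR (S n)).

(* P_n(f) = (f(0), f(1/(n-1)), ..., f((n-2)/(n-1)), f(1)) : component i is f(i/(n-1)) *)
Definition P_map (X : Top) (n : nat) (f : PX X) : prodTop X n :=
  fun i => ev f (INR (proj1_sig i) / INR (n - 1)).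

(* Q_n(f) = (f(0), f(1/n), ..., f((n-1)/n)) : component i is f(i/n) *)
Definition Q_map (X : Top) (n : nat) (f : LX X) : prodTop X n :=
  fun i => ev (proj1_sig f) (INR (proj1_sig i) / INR n).

Definition sect_cover {E B : Top} (p : E -> B) (k : nat) : Prop :=
  exists U : nat -> (B -> Prop),
    (forall i, (i < k)%nat -> topen B (U i)) /\
    (forall b, exists i, (i < k)%nat /\ U i b) /\
    (forall i, (i < k)%nat ->
       exists s : subTop (U i) -> E,
         continuous s /\ forall b, p (s b) = proj1_sig b).

(** Sch p : Some k = the least such k; None = ∞ (no finite cover). *)
Definition Sch {E B : Top} (p : E -> B) : option nat :=
  epsilon (inhabits None) (fun o : option nat =>
    match o with
    | Some k => sect_cover p k /\ forall j, (j < k)%nat -> ~ sect_cover p j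
    | None => forall k, ~ sect_cover p k
    end).

Definition tc (X : Top) (x0 : X) (n : nat) : option nat := Sch (@p_map X x0 n).
Definition ltc (X : Top) (x0 : X) (n : nat) : option nat := Sch (@q_map X x0 n).
Definition TC (X : Top) (n : nat) : option nat := Sch (@P_map X n).
Definition LTC (X : Top) (n : nat) : option nat := Sch (@Q_map X n).

Definition path_connected (X : Top) : Prop :=
  forall x y : X, exists g : Itop -> X,
    continuous g /\ g (pt 0) = x /\ g (pt 1) = y.

(** Reparametrizing paths by suitable Lipschitz maps of I gives, over each
    base X^n, continuous maps in both directions between the two path
    spaces commuting with the evaluation maps.  For [tc]/[ltc], a based
    path is turned into a loop by running it up to time 1 and back down
    (a "tent" reparametrization), which moves the sample points k/(n+1)
    to k/n; conversely a loop is shrunk by the factor n/(n+1).  The same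
    two reparametrizations relate [TC] and [LTC].  Composing local sections
    with these maps shows that the two Schwarz genera are attained by the
    same numbers of open sets. *)

From Stdlib Require Import Reals.
From Stdlib Require Import Lra Lia List FunctionalExtensionality PropExtensionality.
Open Scope R_scope.

Lemma generated_base {T : Type} (S : (T -> Prop) -> Prop) V : S V -> generated S V.
Proof. intros HV O _ HS. exact (HS V HV). Qed.

Lemma continuous_into_generated {Y : Top} {T : Type} (S : (T -> Prop) -> Prop)
    (f : Y -> genTop S) :
  (forall V, S V -> topen Y (fun y => V (f y))) -> continuous f.
Proof.
  intros HS U HU.
  apply (HU (fun W => topen Y (fun y => W (f y)))); [|exact HS].
  destruct (topen_is_topology Y) as [top_T [top_I top_U]].
  split; [exact top_T | split].
  - intros U1 U2 h1 h2. exact (top_I _ _ h1 h2).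
  - intros F HF.
    assert (Hpre : (fun y => exists U, F U /\ U (f y)) =
                   (fun y => exists W, (exists U, F U /\ W = (fun y => U (f y))) /\ W y)).
    { extensionality y; apply propositional_extensionality; split.
      - intros [U1 [h1 h2]]. exists (fun y => U1 (f y)); eauto.
      - intros [W [[U1 [h1 ->]] h2]]; eauto. }
    cbv beta. rewrite Hpre. apply top_U. intros W [U1 [h1 ->]]. exact (HF U1 h1).
Qed.

Lemma continuous_comp {A B C : Top} (f : A -> B) (g : B -> C) :
  continuous f -> continuous g -> continuous (fun x => g (f x)).
Proof. intros hf hg U hU. exact (hf _ (hg U hU)). Qed.

Lemma continuous_proj1_sig {X : Top} (P : X -> Prop) :
  continuous (X := subTop P) (fun x => proj1_sig x).
Proof. intros U hU. apply generated_base. exists U; split; auto. Qed.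

Definition corestrict {Y X : Top} (Q : X -> Prop) (h : Y -> X)
    (hQ : forall y, Q (h y)) (y : Y) : subTop Q :=
  exist Q (h y) (hQ y).

Lemma continuous_corestrict {Y X : Top} (Q : X -> Prop) (h : Y -> X) (hQ : forall y, Q (h y)) :
  continuous h -> continuous (corestrict Q h hQ).
Proof.
  intros hh. apply continuous_into_generated. intros V [U [hU ->]]. exact (hh U hU).
Qed.

Lemma list_choice {A B : Type} (P : B -> Prop) (Rel : A -> B -> Prop) (l : list A) :
  (forall a, In a l -> exists b, P b /\ Rel a b) ->
  exists l' : list B, (forall b, In b l' -> P b) /\
                      (forall a, In a l -> exists b, In b l' /\ Rel a b).
Proof.
  induction l as [|a l IH]; intros Hl.
  - exists nil; split; intros; contradiction.
  - destruct IH as [l' [HP HR]]; [intros; apply Hl; right; auto|].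
    destruct (Hl a (or_introl eq_refl)) as [b [hb hab]].
    exists (b :: l'). split.
    + intros b' [<- | h]; auto.
    + intros a' [<- | h]; [exists b; simpl; auto|].
      destruct (HR a' h) as [b' [hb' hab']]. exists b'; simpl; auto.
Qed.

Lemma compact_image {Y : Top} (g : Itop -> Y) (K : Itop -> Prop) :
  continuous g -> compact_in K -> compact_in (fun y => exists s, K s /\ g s = y).
Proof.
  intros hg hK F HF Hcov.
  destruct (hK (fun W => exists U, F U /\ W = (fun s => U (g s)))) as [lW [HlW HcovW]].
  - intros W [U [hU ->]]. exact (hg U (HF U hU)).
  - intros s hs. destruct (Hcov (g s)) as [U [hU hgs]]; [eauto|].
    exists (fun s => U (g s)); eauto.
  - destruct (list_choice F (fun W U => W = (fun s => U (g s))) lW) as [l [Hl HlW']].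
    { intros W hW. destruct (HlW W hW) as [U [hU ->]]; eauto. }
    exists l; split; [exact Hl|].
    intros y [s [hs <-]]. destruct (HcovW s hs) as [W [hW hWs]].
    destruct (HlW' W hW) as [U [hU ->]]. eauto.
Qed.

Lemma R_open_is_topology : is_topology R_open.
Proof.
  split; [|split].
  - intros x _. exists 1; split; [lra | auto].
  - intros U V hU hV x [hx1 hx2].
    destruct (hU x hx1) as [e1 [he1 h1]]. destruct (hV x hx2) as [e2 [he2 h2]].
    exists (Rmin e1 e2). split; [apply Rmin_glb_lt; auto|].
    intros y hy. pose proof (Rmin_l e1 e2). pose proof (Rmin_r e1 e2).
    split; [apply h1 | apply h2]; lra.
  - intros F HF x [U [hU hx]].
    destruct (HF U hU x hx) as [e [he h]]. exists e; split; auto.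
    intros y hy. exists U; auto.
Qed.

Lemma RTop_openE U : topen RTop U <-> R_open U.
Proof.
  split.
  - intros HU. exact (HU R_open R_open_is_topology (fun V hV => hV)).
  - apply generated_base.
Qed.

Definition lipschitz (g : R -> R) : Prop :=
  exists L, 0 < L /\ forall x y, Rabs (g x - g y) <= L * Rabs (x - y).

Lemma lipschitz_id : lipschitz (fun t => t).
Proof. exists 1; split; [lra | intros; lra]. Qed.

Lemma lipschitz_one_sub : lipschitz (fun t => 1 - t).
Proof.
  exists 1; split; [lra|]. intros x y.
  replace (1 - x - (1 - y)) with (- (x - y)) by ring. rewrite Rabs_Ropp. lra.
Qed.

Lemma lipschitz_scale c g : lipschitz g -> lipschitz (fun t => c * g t).
Proof.
  intros [L [hL hg]]. exists ((Rabs c + 1) * L). split.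
  { pose proof (Rabs_pos c). nra. }
  intros x y. rewrite <- Rmult_minus_distr_l, Rabs_mult.
  specialize (hg x y). pose proof (Rabs_pos c). pose proof (Rabs_pos (g x - g y)).
  pose proof (Rabs_pos (x - y)). nra.
Qed.

Lemma lipschitz_min g h : lipschitz g -> lipschitz h -> lipschitz (fun t => Rmin (g t) (h t)).
Proof.
  intros [L1 [hL1 hg]] [L2 [hL2 hh]]. exists (L1 + L2). split; [lra|].
  intros x y. specialize (hg x y). specialize (hh x y).
  pose proof (Rabs_pos (x - y)).
  assert (Hmin : Rabs (Rmin (g x) (h x) - Rmin (g y) (h y)) <=
                 Rabs (g x - g y) + Rabs (h x - h y)).
  { unfold Rmin. repeat destruct Rle_dec; unfold Rabs; repeat destruct Rcase_abs; lra. }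
  nra.
Qed.

Definition clamp (r : R) : R := Rmax 0 (Rmin 1 r).

Lemma clamp_id r : 0 <= r <= 1 -> clamp r = r.
Proof. unfold clamp, Rmax, Rmin; intros; repeat destruct Rle_dec; lra. Qed.

Lemma lipschitz_clamp g : lipschitz g -> lipschitz (fun t => clamp (g t)).
Proof.
  intros [L [hL hg]]. exists L; split; [exact hL|]. intros x y.
  eapply Rle_trans; [|apply hg].
  unfold clamp, Rmax, Rmin. repeat destruct Rle_dec; unfold Rabs; repeat destruct Rcase_abs; lra.
Qed.

Lemma R_open_preimage_lipschitz g U : lipschitz g -> R_open U -> R_open (fun t => U (g t)).
Proof.
  intros [L [hL hg]] hU x hx. destruct (hU _ hx) as [e [he h]].
  exists (e / L). split; [apply Rdiv_lt_0_compat; auto|].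
  intros y hy. apply h. eapply Rle_lt_trans; [apply hg|].
  apply Rmult_lt_compat_l with (r := L) in hy; [|exact hL].
  replace (L * (e / L)) with e in hy by (field; lra). exact hy.
Qed.

(** [pt] clamps, so [reparam_I g] is a self-map of I for any real function [g]. *)
Definition reparam_I (g : R -> R) (s : Itop) : Itop := pt (g (proj1_sig s)).

Lemma continuous_reparam_I g : lipschitz g -> continuous (reparam_I g).
Proof.
  intros hg. apply continuous_into_generated. intros V [U [hU ->]].
  apply generated_base. exists (fun r => U (clamp (g r))). split; [|reflexivity].
  apply RTop_openE, R_open_preimage_lipschitz; [apply lipschitz_clamp, hg|].
  apply (proj1 (RTop_openE U)), hU.
Qed.

Definition precomp {X : Top} (ps : Itop -> Itop) (hps : continuous ps) (f : PX X) : PX X :=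
  exist _ (fun t => proj1_sig f (ps t)) (continuous_comp ps (proj1_sig f) hps (proj2_sig f)).

Lemma continuous_precomp {X : Top} ps hps : continuous (@precomp X ps hps).
Proof.
  apply continuous_into_generated. intros V [K [U [hK [hU ->]]]].
  assert (Hpre : (fun f : PX X => forall t, K t -> U (proj1_sig (precomp ps hps f) t)) =
                 (fun f : PX X => forall t, (exists s, K s /\ ps s = t) -> U (proj1_sig f t))).
  { extensionality f; apply propositional_extensionality; simpl; split.
    - intros h t [s [hs <-]]. auto.
    - intros h t ht. apply h. eauto. }
  rewrite Hpre. apply generated_base.
  exists (fun t => exists s, K s /\ ps s = t), U.
  split; [apply compact_image; auto | split; [exact hU | reflexivity]].
Qed.

Definition reparam {X : Top} (g : R -> R) (hg : lipschitz g) : PX X -> PX X :=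
  precomp (reparam_I g) (continuous_reparam_I g hg).

Lemma continuous_reparam {X : Top} g hg : continuous (@reparam X g hg).
Proof. apply continuous_precomp. Qed.

Lemma ev_reparam {X : Top} g hg (f : PX X) r :
  0 <= r <= 1 -> ev (reparam g hg f) r = ev f (g r).
Proof.
  intros hr. unfold ev, reparam, precomp, reparam_I; simpl.
  change (Rmax 0 (Rmin 1 r)) with (clamp r). rewrite (clamp_id r hr). reflexivity.
Qed.

Lemma sect_cover_comp {E1 E2 B : Top} (p1 : E1 -> B) (p2 : E2 -> B) (h : E1 -> E2) k :
  continuous h -> (forall e, p2 (h e) = p1 e) -> sect_cover p1 k -> sect_cover p2 k.
Proof.
  intros hc hp [U [HU [Hcov Hs]]]. exists U; split; [|split]; auto.
  intros i hi. destruct (Hs i hi) as [s [sc sp]].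
  exists (fun b => h (s b)). split.
  - exact (continuous_comp s h sc hc).
  - intros b. rewrite hp. apply sp.
Qed.

Lemma Sch_eq_of_maps_over_base {E1 E2 B : Top} (p1 : E1 -> B) (p2 : E2 -> B)
    (h12 : E1 -> E2) (h21 : E2 -> E1) :
  continuous h12 -> (forall e, p2 (h12 e) = p1 e) ->
  continuous h21 -> (forall e, p1 (h21 e) = p2 e) ->
  Sch p1 = Sch p2.
Proof.
  intros c12 e12 c21 e21.
  assert (Hk : forall k, sect_cover p1 k <-> sect_cover p2 k).
  { split; [apply (sect_cover_comp p1 p2 h12) | apply (sect_cover_comp p2 p1 h21)]; auto. }
  unfold Sch. f_equal. extensionality o. apply propositional_extensionality.
  destruct o as [k|]; [|split; intros H j c; apply (H j), Hk, c].
  split; intros [Hc Hmin]; split; try apply Hk, Hc; intros j hj c; apply (Hmin j hj), Hk, c.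
Qed.

Definition shrink (m t : R) : R := m / (m + 1) * t.

(** Goes up linearly to 1 at time m/(m+1) and back down to 0 at time 1:
    a path reparametrized by [tent m] is a loop at its starting point. *)
Definition tent (m t : R) : R := Rmin ((m + 1) / m * t) ((m + 1) * (1 - t)).

Lemma lipschitz_shrink m : lipschitz (shrink m).
Proof. apply lipschitz_scale, lipschitz_id. Qed.

Lemma lipschitz_tent m : lipschitz (tent m).
Proof.
  apply lipschitz_min; apply lipschitz_scale; [apply lipschitz_id | apply lipschitz_one_sub].
Qed.

Lemma shrink0 m : shrink m 0 = 0.
Proof. unfold shrink; ring. Qed.

Lemma tent0 m : 0 < m -> tent m 0 = 0.
Proof.
  intros hm. unfold tent. rewrite Rmult_0_r, Rmin_left; [reflexivity | lra].
Qed.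

Lemma tent1 m : 0 < m -> tent m 1 = 0.
Proof.
  intros hm. unfold tent. rewrite Rminus_diag, Rmult_0_r, Rmin_right; [reflexivity|].
  assert (0 < (m + 1) / m) by (apply Rdiv_lt_0_compat; lra). lra.
Qed.

Lemma shrink_sample m k : 0 < m -> shrink m (k / m) = k / (m + 1).
Proof. intros hm. unfold shrink. field. lra. Qed.

Lemma sample_in_I m k : 0 < m -> 0 <= k <= m -> 0 <= k / m <= 1.
Proof.
  intros hm hk. assert (Hk : k / m * m = k) by (field; lra).
  split; nra.
Qed.

Lemma tent_sample m k : 0 < m -> 0 <= k <= m -> tent m (k / (m + 1)) = k / m.
Proof.
  intros hm hk. unfold tent.
  replace ((m + 1) / m * (k / (m + 1))) with (k / m) by (field; lra).
  replace ((m + 1) * (1 - k / (m + 1))) with (m + 1 - k) by (field; lra).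
  apply Rmin_left. pose proof (sample_in_I m k hm hk). lra.
Qed.

Lemma continuous_reparam_sub {X : Top} (P : PX X -> Prop) g hg :
  continuous (X := subTop P) (fun f => reparam g hg (proj1_sig f)).
Proof. apply continuous_comp; [apply continuous_proj1_sig | apply continuous_reparam]. Qed.

Lemma ltc_eq_tc (X : Top) (x0 : X) (n : nat) : (1 <= n)%nat -> ltc X x0 n = tc X x0 n.
Proof.
  intros hn. set (m := INR n).
  assert (hm : 0 < m) by (apply lt_0_INR; lia).
  assert (HSn : INR (S n) = m + 1) by apply S_INR.
  assert (Hk : forall i : idx n, 0 <= INR (S (proj1_sig i)) <= m).
  { intros [i hi]. split; [apply pos_INR | apply le_INR; exact hi]. }
  assert (to_based : forall f : OmegaX X x0,
             ev (reparam _ (lipschitz_shrink m) (proj1_sig f)) 0 = x0).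
  { intros f. rewrite ev_reparam, shrink0; [exact (proj1 (proj2_sig f)) | lra]. }
  assert (to_loop : forall f : PbX X x0,
            ev (reparam _ (lipschitz_tent m) (proj1_sig f)) 0 = x0 /\
            ev (reparam _ (lipschitz_tent m) (proj1_sig f)) 1 = x0).
  { intros f. rewrite !ev_reparam, tent0, tent1; [exact (conj (proj2_sig f) (proj2_sig f)) | ..]; auto; lra. }
  apply (Sch_eq_of_maps_over_base _ _ (corestrict _ _ to_based) (corestrict _ _ to_loop)).
  - apply continuous_corestrict, continuous_reparam_sub.
  - intros f. extensionality i. unfold p_map, q_map, corestrict; cbn [proj1_sig].
    rewrite ev_reparam, shrink_sample, HSn; auto. apply sample_in_I; auto.
  - apply continuous_corestrict, continuous_reparam_sub.
  - intros f. extensionality i. unfold p_map, q_map, corestrict; cbn [proj1_sig].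
    rewrite HSn, ev_reparam, tent_sample; auto.
    apply sample_in_I; [lra | pose proof (Hk i); lra].
Qed.

Lemma LTC_eq_TC (X : Top) (n : nat) : (2 <= n)%nat -> LTC X n = TC X n.
Proof.
  intros hn. destruct n as [|n']; [lia|]. set (m := INR n').
  assert (hm : 0 < m) by (apply lt_0_INR; lia).
  assert (HSn : INR (S n') = m + 1) by apply S_INR.
  assert (Hn' : INR (S n' - 1) = m) by (unfold m; f_equal; lia).
  assert (Hk : forall i : idx (S n'), 0 <= INR (proj1_sig i) <= m).
  { intros [i hi]. split; [apply pos_INR | apply le_INR; cbn; lia]. }
  assert (to_loop : forall f : PX X,
            ev (reparam _ (lipschitz_tent m) f) 0 = ev (reparam _ (lipschitz_tent m) f) 1).
  { intros f. rewrite !ev_reparam, tent0, tent1; auto; lra. }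
  apply (Sch_eq_of_maps_over_base _ _
           (fun f : LX X => reparam _ (lipschitz_shrink m) (proj1_sig f))
           (corestrict _ _ to_loop)).
  - apply continuous_reparam_sub.
  - intros f. extensionality i. unfold P_map, Q_map.
    rewrite Hn', ev_reparam, shrink_sample, HSn; auto. apply sample_in_I; auto.
  - apply continuous_corestrict, continuous_reparam.
  - intros f. extensionality i. unfold P_map, Q_map, corestrict; cbn [proj1_sig].
    rewrite Hn', HSn, ev_reparam, tent_sample; auto.
    apply sample_in_I; [lra | pose proof (Hk i); lra].
Qed.

Theorem mainTheorem3 (X : Top) (x0 : X) (Hpc : path_connected X) :
  (forall n : nat, (1 <= n)%nat -> ltc X x0 n = tc X x0 n) /\
  (forall n : nat, (2 <= n)%nat -> LTC X n = TC X n).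
Proof. split; [apply ltc_eq_tc | apply LTC_eq_TC]. Qed.
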